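(* Let $e\geqslant 1$ be an integer, $b\geqslant 2$ an even integer, and $a$ a positive integer. Assume there exist an $(e,b)$-happy number $l$ and a positive integer $h'$ with $h'\equiv a\pmod{b-1}$ such that $l\equiv T_{e,b}(h')\pmod{b-1}$. Then there exists an $(e,b)$-happy number $h$ with $h\equiv a\pmod{b-1}$.
   Context: For a positive integer $n=\sum_{j=0}^k a_j b^j$ with $0\leqslant a_j<b$, $T_{e,b}(n)=\sum_{j=0}^k a_j^e$; $T_{e,b}^r$ is the $r$-th iterate, $T_{e,b}^0(n)=n$. A positive integer $n$ is $(e,b)$-happy if $T_{e,b}^r(n)=1$ for some $r\geqslant 0$. *)

From mathcomp Require Import all_boot.
Set Implicit Arguments. Unset Strict Implicit. Unset Printing Implicit Defensive.

(* Sum of e-th powers of the base-b digits of n, computed with fuel k.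
   With k >= number of digits (e.g. k = n when b >= 2) this is exact. *)
Fixpoint digit_pow_sum (k e b n : nat) : nat :=
  match k with
  | 0 => 0
  | k'.+1 => if n == 0 then 0 else (n %% b) ^ e + digit_pow_sum k' e b (n %/ b)
  end.

Definition T (e b n : nat) : nat := digit_pow_sum n e b n.

Definition happy (e b n : nat) : Prop := 0 < n /\ exists r : nat, iter r (T e b) n = 1.

From mathcomp Require Import all_boot.
From mathcomp Require Import zify.

Set Implicit Arguments.
Unset Strict Implicit.
Unset Printing Implicit Defensive.

(* Appending a digit d to n (n |-> n b + d) adds d^e to T and, as b = 1 mod b - 1,
   adds d to the residue mod b - 1.  Pad the happy l with zeros to L = l b^k >= T(h');
   then T(L) = T(l) and L = l = T(h') mod b - 1, so appending L - T(h') ones to h'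
   yields h = h' = a mod b - 1 with T(h) = L. *)

Lemma modn_pred_id b : 0 < b -> b = 1 %[mod b.-1].
Proof. by case: b => // b _ /=; rewrite -addn1 modnDl. Qed.

Lemma modn_mul_pred b n : 0 < b -> n * b = n %[mod b.-1].
Proof. by move=> b_gt0; rewrite -modnMmr modn_pred_id // modnMmr muln1. Qed.

Lemma modn_mul_exp_pred b n k : 0 < b -> n * b ^ k = n %[mod b.-1].
Proof.
move=> b_gt0; elim: k => [|k IHk]; first by rewrite muln1.
by rewrite expnSr mulnA modn_mul_pred.
Qed.

Definition append_ones (b n m : nat) : nat := iter m (fun x => x * b + 1) n.

Lemma append_ones_gt0 b n m : 0 < n -> 0 < append_ones b n m.
Proof. by case: m => //= m; rewrite addn1. Qed.

Lemma append_ones_mod b n m : 0 < b -> append_ones b n m = n + m %[mod b.-1].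
Proof.
move=> b_gt0; elim: m => [|m IHm] /=; first by rewrite addn0.
by rewrite -modnDml modn_mul_pred // IHm modnDml -addnA addn1.
Qed.

Section DigitPowerSum.

Variables e b : nat.
Hypothesis b_gt1 : 1 < b.

Lemma digit_pow_sum_fuel k1 k2 n : n <= k1 -> n <= k2 ->
  digit_pow_sum k1 e b n = digit_pow_sum k2 e b n.
Proof.
elim: k1 k2 n => [|k1 IHk] [|k2] n //= le_n1 le_n2; case: posnP => // n_gt0.
1,2: by move: n_gt0; rewrite lt0n -leqn0 ?le_n1 ?le_n2.
have lt_nb_n : n %/ b < n by rewrite ltn_Pdiv.
by rewrite (IHk k2); lia.
Qed.

Lemma T_append_digit n d : 0 < e -> d < b -> T e b (n * b + d) = d ^ e + T e b n.
Proof.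
move=> e_gt0 lt_db; rewrite /T; case nbd: (n * b + d) => [|k].
  have [-> ->] : n = 0 /\ d = 0 by lia.
  by rewrite exp0n.
rewrite /= -nbd modnMDl modn_small // divnMDl ?divn_small ?addn0 //; last lia.
by congr (_ + _); apply: digit_pow_sum_fuel; nia.
Qed.

Lemma T_mul_exp n k : 0 < e -> T e b (n * b ^ k) = T e b n.
Proof.
move=> e_gt0; elim: k => [|k IHk]; first by rewrite muln1.
by rewrite expnSr mulnA -[_ * b]addn0 T_append_digit ?exp0n ?(ltnW b_gt1).
Qed.

Lemma T_append_ones n m : 0 < e -> T e b (append_ones b n m) = T e b n + m.
Proof.
move=> e_gt0; elim: m => [|m IHm] /=; first by rewrite addn0.
by rewrite T_append_digit // exp1n IHm addnS add1n.
Qed.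

Lemma T1 : T e b 1 = 1.
Proof. by rewrite /T /= modn_small // exp1n addn0. Qed.

Lemma happy_of_T n : 0 < n -> happy e b (T e b n) -> happy e b n.
Proof. by move=> n_gt0 [_ [r iterT]]; split=> //; exists r.+1; rewrite iterSr. Qed.

Lemma happy_T_eq n m : 0 < n -> T e b n = T e b m -> happy e b m -> happy e b n.
Proof.
move=> n_gt0 Tnm [_ [r iterT]]; split=> //; exists r.+1.
by rewrite iterSr Tnm -iterSr iterS iterT T1.
Qed.

End DigitPowerSum.

Theorem lemma2p5 (e b a : nat) :
  1 <= e -> 2 <= b -> ~~ odd b -> 0 < a ->
  (exists l h' : nat, happy e b l /\ 0 < h' /\ h' = a %[mod b.-1] /\
                      l = T e b h' %[mod b.-1]) ->
  exists h : nat, happy e b h /\ h = a %[mod b.-1].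
Proof.
move=> e_gt0 b_gt1 _ _ [l [h' [happy_l [h'_gt0 [h'_a l_Th']]]]].
have b_gt0 : 0 < b := ltnW b_gt1.
have l_gt0 : 0 < l by case: happy_l.
pose L := l * b ^ T e b h'.
have happy_L : happy e b L.
  apply: (happy_T_eq b_gt1) happy_l; last by rewrite T_mul_exp.
  by rewrite /L muln_gt0 l_gt0 expn_gt0 b_gt0.
have le_Th'_L : T e b h' <= L.
  by apply: leq_trans (ltnW (ltn_expl _ b_gt1)) _; rewrite leq_pmull.
have dvd_L : b.-1 %| L - T e b h'.
  by rewrite -eqn_mod_dvd // modn_mul_exp_pred // l_Th'.
exists (append_ones b h' (L - T e b h')); split.
  apply: happy_of_T; first exact: append_ones_gt0.
  by rewrite T_append_ones // subnKC.
by rewrite append_ones_mod // -modnDmr (eqP dvd_L) addn0.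
Qed.
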